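(* Let $A$ be an abelian group and $S_1,\ldots,S_k$ a distinct difference system in $A$. For each $i$ and each $z \in S_i$ define $T_{i,z} = \{x - z \mid x \in S_i,\ x \neq z\}$. If $T_{i,z} \cap T_{j,w} \neq \emptyset$, then $i = j$ and $z = w$.
   Context: Subsets $S_1,\ldots,S_k$ of an abelian group $A$ form a distinct difference system if: (i) for any $i,j$ and any $x,y \in S_i$, $z,w \in S_j$ with $x \neq y$ and $z \neq w$, the equation $x-y=z-w$ implies $x=z$ and $y=w$; (ii) each $S_i$ contains $0$ and at least one other element; (iii) $S_i \cap S_j = \{0\}$ for $i \neq j$. *)

From mathcomp Require Import all_boot all_algebra.
Set Implicit Arguments. Unset Strict Implicit. Unset Printing Implicit Defensive.
Import GRing.Theory.
Local Open Scope ring_scope.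

Definition distinct_difference_system (A : zmodType) (k : nat)
  (S : 'I_k -> A -> Prop) : Prop :=
  (forall (i j : 'I_k) (x y z w : A),
      S i x -> S i y -> S j z -> S j w -> x <> y -> z <> w ->
      x - y = z - w -> x = z /\ y = w)
  /\ (forall i : 'I_k, S i 0 /\ exists x, S i x /\ x <> 0)
  /\ (forall (i j : 'I_k), i <> j -> forall x, S i x -> S j x -> x = 0).

Definition T_set (A : zmodType) (k : nat) (S : 'I_k -> A -> Prop)
  (i : 'I_k) (z : A) : A -> Prop :=
  fun d => exists x, S i x /\ x <> z /\ d = x - z.

From mathcomp Require Import all_boot all_algebra.
Import GRing.Theory.
Local Open Scope ring_scope.

Section DistinctDifferenceSystem.

Context {A : zmodType} {k : nat} {S : 'I_k -> A -> Prop}.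
Hypothesis hS : distinct_difference_system S.

Lemma dds_diff_eq {i j : 'I_k} {x y z w : A} :
  S i x -> S i y -> S j z -> S j w -> x <> y -> z <> w ->
  x - y = z - w -> x = z /\ y = w.
Proof. by case: hS => diff_inj _; apply: diff_inj. Qed.

Lemma dds_index_eq {i j : 'I_k} {x y : A} :
  S i x -> S i y -> S j x -> S j y -> x <> y -> i = j.
Proof.
move=> Six Siy Sjx Sjy xy; case: (eqVneq i j) => [//|/eqP ij].
have [_ [_ meet0]] := hS.
by case: xy; rewrite (meet0 i j ij x Six Sjx) (meet0 i j ij y Siy Sjy).
Qed.

End DistinctDifferenceSystem.

Theorem lemma3p23 (A : zmodType) (k : nat) (S : 'I_k -> A -> Prop)
  (hS : distinct_difference_system S)
  (i j : 'I_k) (z w : A) (hz : S i z) (hw : S j w)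
  (hne : exists d, T_set S i z d /\ T_set S j w d) :
  i = j /\ z = w.
Proof.
case: hne => d [[x [Six [xz ->]]] [y [Sjy [yw same_diff]]]].
have [exy ezw] := dds_diff_eq hS Six hz Sjy hw xz yw same_diff.
subst y w; split=> //.
exact: (dds_index_eq hS Six hz Sjy hw xz).
Qed.
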